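(* Let $f: X \to Y$ be a continuous surjection which is open, closed and finite-to-one (each fiber $f^{-1}(y)$ is finite), where $Y$ is set strongly star Hurewicz. Then $X$ is nearly set strongly star Hurewicz.
   Context: For a subset $A$ of a space $X$ and a collection $\mathcal{U}$ of subsets of $X$, ${\rm St}(A,\mathcal{U}) = \bigcup\{U \in \mathcal{U}: U \cap A \neq \emptyset\}$. A space $Y$ is set strongly star Hurewicz if for each nonempty $B \subset Y$ and each sequence $(\mathcal{V}_n: n\in\mathbb{N})$ of collections of sets open in $Y$ with $\overline{B} \subset \bigcup\mathcal{V}_n$ for all $n$, there are finite sets $F_n \subset \overline{B}$ such that each $y \in B$ lies in ${\rm St}(F_n,\mathcal{V}_n)$ for all but finitely many $n$. A space $X$ is nearly set strongly star Hurewicz if for each nonempty $A \subset X$ and each sequence $(\mathcal{U}_n: n \in \mathbb{N})$ of open covers of $X$ there is a sequence $(F_n: n\in\mathbb{N})$ of finite subsets of $X$ such that each $x \in A$ lies in ${\rm St}(F_n,\mathcal{U}_n)$ for all but finitely many $n$. *)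

From HB Require Import structures.
From mathcomp Require Import all_boot all_order all_algebra.
From mathcomp Require Import all_classical all_reals topology.
Set Implicit Arguments. Unset Strict Implicit. Unset Printing Implicit Defensive.
Local Open Scope classical_set_scope.

Definition St {T : Type} (A : set T) (U : set (set T)) : set T :=
  [set x | exists2 V, U V & (V `&` A !=set0) /\ V x].

Definition set_strongly_star_Hurewicz (Y : topologicalType) : Prop :=
  forall (B : set Y), B !=set0 ->
  forall (V : nat -> set (set Y)),
    (forall n, (forall W, V n W -> open W) /\ closure B `<=` \bigcup_(W in V n) W) ->
    exists F : nat -> set Y,
      (forall n, finite_set (F n) /\ F n `<=` closure B) /\
      (forall y, B y -> exists N : nat, forall n, (N <= n)%N -> St (F n) (V n) y).

Definition nearly_set_strongly_star_Hurewicz (X : topologicalType) : Prop :=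
  forall (A : set X), A !=set0 ->
  forall (U : nat -> set (set X)),
    (forall n, (forall W, U n W -> open W) /\ [set: X] `<=` \bigcup_(W in U n) W) ->
    exists F : nat -> set X,
      (forall n, finite_set (F n)) /\
      (forall x, A x -> exists N : nat, forall n, (N <= n)%N -> St (F n) (U n) x).

From HB Require Import structures.
From mathcomp Require Import all_boot all_order all_algebra.
From mathcomp Require Import all_classical all_reals topology.
Set Implicit Arguments. Unset Strict Implicit. Unset Printing Implicit Defensive.
Local Open Scope classical_set_scope.

(* Let f : X -> Y be open, closed and finite-to-one, and let
   (U_n) be a sequence of open covers of X.  Choose for every n and x a member
   g_n(x) of U_n containing x.  For z in Y with (finite) fiber K = f^-1(z) put
     W_n(z) = (\bigcap_(x in K) f(g_n x)) \ f(X \ \bigcup_(x in K) g_n x),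
   an open neighbourhood of z: the first part is a finite intersection of
   images of open sets, the second the complement of the image of a closed
   set.  The sets W_n(z) form open covers V_n of Y.  Applying the set strong
   star Hurewicz property of Y to B = f(A) yields finite sets F_n, and the
   finite sets f^-1(F_n) witness the property for A: if f x lies in W_n(z) and
   W_n(z) meets F_n, then x lies in some g_n(x') with f x' = z, and g_n(x')
   meets f^-1(F_n). *)

Lemma open_fin_bigcap (T : topologicalType) (I : Type) (D : set I)
    (F : I -> set T) :
  finite_set D -> (forall i, D i -> open (F i)) -> open (\bigcap_(i in D) F i).
Proof.
elim/Pchoice: I => I in D F * => Dfin oF.
rewrite -bigsetI_fset_set// big_seq; apply: big_ind => //.
- exact: openT.
- exact: openI.
- by move=> i; rewrite in_fset_set ?inE// => /oF.
Qed.

Lemma finite_preimage_of_finite_fibers (T U : Type) (f : T -> U) (F : set U) :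
  (forall y, finite_set (f @^-1` [set y])) -> finite_set F ->
  finite_set (f @^-1` F).
Proof.
move=> ffin Ffin.
have -> : f @^-1` F = \bigcup_(y in F) f @^-1` [set y].
  by apply/seteqP; split => [x Fx | x [y Fy /= ->]] //; exists (f x).
exact: bigcup_finite.
Qed.

Lemma cover_selector (T : Type) (U : set (set T)) :
  [set: T] `<=` \bigcup_(W in U) W -> exists g : T -> set T, forall x, U (g x) /\ g x x.
Proof.
move=> cov; have : forall x, exists W, U W /\ W x.
  by move=> x; have [W UW Wx] := cov x I; exists W.
by move=> /choice [g gP]; exists g.
Qed.

Section FiberNeighbourhood.
Variables (X Y : topologicalType) (f : X -> Y) (g : X -> set X).

Definition fiber_nbhd (z : Y) : set Y :=
  (\bigcap_(x in f @^-1` [set z]) f @` g x) `&`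
  ~` (f @` ~` (\bigcup_(x in f @^-1` [set z]) g x)).

Lemma fiber_nbhd_center (z : Y) : (forall x, g x x) -> fiber_nbhd z z.
Proof.
move=> g_center; split; first by move=> x fxz; exists x.
by move=> [x notcov fxz]; apply: notcov; exists x.
Qed.

Lemma fiber_nbhd_open (z : Y) :
  (forall V : set X, open V -> open (f @` V)) ->
  (forall C : set X, closed C -> closed (f @` C)) ->
  finite_set (f @^-1` [set z]) -> (forall x, open (g x)) ->
  open (fiber_nbhd z).
Proof.
move=> fop fcl zfin gop; apply: openI.
  by apply: open_fin_bigcap => // x _; exact: fop.
apply/closed_openC/fcl/open_closedC.
by apply: bigcup_open => x _; exact: gop.
Qed.

Lemma star_pullback (U : set (set X)) (F : set Y) (x : X) :
  (forall x', U (g x')) ->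
  St F (range fiber_nbhd) (f x) -> St (f @^-1` F) U x.
Proof.
move=> gU [_ [z _ <-]] [[y [[hits _] Fy]] [_ fx_in]].
have [x' fx'z gx'x] : (\bigcup_(x' in f @^-1` [set z]) g x') x.
  by apply: contrapT => notcov; apply: fx_in; exists x.
exists (g x') => //; split=> //.
have [x'' gx'x'' fx''y] := hits x' fx'z.
by exists x''; split=> //=; rewrite fx''y.
Qed.

End FiberNeighbourhood.

Theorem theorem3p14 (X Y : topologicalType) (f : X -> Y) :
  continuous f ->
  (forall y : Y, exists x : X, f x = y) ->
  (forall U : set X, open U -> open (f @` U)) ->
  (forall C : set X, closed C -> closed (f @` C)) ->
  (forall y : Y, finite_set (f @^-1` [set y])) ->
  set_strongly_star_Hurewicz Y ->
  nearly_set_strongly_star_Hurewicz X.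
Proof.
move=> _ _ fop fcl ffin HY A A0 U HU.
have [g gP] : exists g : nat -> X -> set X, forall n x, U n (g n x) /\ g n x x.
  have : forall n, exists g, forall x, U n (g x) /\ g x x.
    by move=> n; apply: cover_selector; have [] := HU n.
  by move=> /choice [g gP]; exists g.
pose V n := range (fiber_nbhd f (g n)).
have HV n : (forall W, V n W -> open W) /\
    closure (f @` A) `<=` \bigcup_(W in V n) W.
  split=> [_ [z _ <-] | z _].
    apply: fiber_nbhd_open => // x.
    by apply: (proj1 (HU n)); have [] := gP n x.
  exists (fiber_nbhd f (g n) z); first by exists z.
  by apply: fiber_nbhd_center => x; have [] := gP n x.
have [F [Ffin HF]] := HY (f @` A) (image_nonempty f A0) V HV.
exists (fun n => f @^-1` F n); split.
  by move=> n; apply: finite_preimage_of_finite_fibers => //; have [] := Ffin n.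
move=> x Ax; have [N HN] := HF (f x) (ex_intro2 _ _ x Ax erefl).
exists N => n /HN; apply: star_pullback => x'; by have [] := gP n x'.
Qed.
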